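(* Let $\mathcal{A}=\{H_1,\dots,H_n\}$ be an arrangement of $n$ distinct lines in $\mathbb{P}^2_{\mathbb{C}}$ and assume $|H_n\cap \operatorname{mult}(\mathcal{A})|\le 2$. Set $\mathcal{A}'=\{H_1,\dots,H_{n-1}\}$, $I=I(\mathcal{A})$, $I'=I(\mathcal{A}')$. If $\mathcal{R}(I')$ is irreducible (in the Zariski topology), then $\mathcal{R}(I)$ is also irreducible.
   Context: Each line $H_i=\{a_ix+b_iy+c_iz=0\}$ is identified with the point $(a_i:b_i:c_i)$ of the dual plane $(\mathbb{P}^2)^*$, and $\det(H_i,H_j,H_k)$ denotes the determinant of the $3\times 3$ matrix with rows $(a_i,b_i,c_i),(a_j,b_j,c_j),(a_k,b_k,c_k)$ (its vanishing is well defined and equivalent to $H_i\cap H_j\cap H_k\ne\emptyset$). The incidence of an arrangement $\mathcal{A}=\{H_1,\dots,H_n\}$ is $I(\mathcal{A})=\{\{i,j,k\}\subset\{1,\dots,n\}$ with $i,j,k$ distinct $: H_i\cap H_j\cap H_k\neq\emptyset\}$. For a set $I$ of 3-element subsets of $\{1,\dots,n\}$, the realization space is $\mathcal{R}(I)=\{(H_1,\dots,H_n)\in((\mathbb{P}^2)^* )^n : H_i\ne H_j \text{ for } i\ne j,\ \det(H_i,H_j,H_k)=0 \text{ for }\{i,j,k\}\in I,\ \det(H_i,H_j,H_k)\ne 0\text{ for }\{i,j,k\}\notin I\}$, a quasi-projective variety with its Zariski topology. For an arrangement $\mathcal{A}$, $\operatorname{mult}(\mathcal{A})$ is the set of points of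 $\mathbb{P}^2$ lying on at least three lines of $\mathcal{A}$ (multiple points). *)

From HB Require Import structures.
From mathcomp Require Import all_boot all_order all_algebra.
Set Implicit Arguments. Unset Strict Implicit. Unset Printing Implicit Defensive.
Import GRing.Theory.
Local Open Scope ring_scope.

Section LineArr.
Variable F : fieldType.

(* A line H = {a x + b y + c z = 0} of P^2 is represented by its (nonzero)
   coefficient row vector (a, b, c), a representative of the point (a:b:c)
   of the dual plane; a point of P^2 is likewise a nonzero row vector. *)
Definition vec3 := 'rV[F]_3.

Definition mx3 (u v w : vec3) : 'M[F]_3 :=
  \matrix_(i < 3, j < 3)
     (if val i == 0%N then u ord0 j else if val i == 1%N then v ord0 j
      else w ord0 j).
Definition det3 (u v w : vec3) : F := \det (mx3 u v w).

Definition proj_eq (u v : vec3) : Prop := exists c : F, u = c *: v.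

Definition on_line (H p : vec3) : bool := \sum_(j < 3) H ord0 j * p ord0 j == 0.

Definition incidence (n : nat) (A : 'I_n -> vec3) : {set {set 'I_n}} :=
  [set T : {set 'I_n} | [exists i : 'I_n, exists j : 'I_n, exists k : 'I_n,
     [&& i != j, j != k, i != k, T == [set i; j; k] &
         det3 (A i) (A j) (A k) == 0]]].

Definition is_mult_point (n : nat) (A : 'I_n -> vec3) (p : vec3) : Prop :=
  p != 0 /\ exists i j k : 'I_n,
    [/\ i != j, j != k, i != k &
        [&& on_line (A i) p, on_line (A j) p & on_line (A k) p]].

Definition at_most_two_mult_on (n : nat) (A : 'I_n -> vec3) (H : vec3) : Prop :=
  ~ exists p1 p2 p3 : vec3,
      [/\ is_mult_point A p1 /\ on_line H p1,
          is_mult_point A p2 /\ on_line H p2,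
          is_mult_point A p3 /\ on_line H p3 &
          [/\ ~ proj_eq p1 p2, ~ proj_eq p2 p3 & ~ proj_eq p1 p3]].

(* realization space R(I), as the set of tuples of representatives
   (it is invariant under rescaling each H_i by a nonzero scalar) *)
Definition realization (n : nat) (I : {set {set 'I_n}}) (x : 'I_n -> vec3) : Prop :=
  [/\ forall i, x i != 0,
      forall i j, i != j -> ~ proj_eq (x i) (x j) &
      forall i j k, i != j -> j != k -> i != k ->
        ([set i; j; k] \in I <-> det3 (x i) (x j) (x k) = 0)].

Inductive mpoly (V : Type) : Type :=
| MVar of V
| MCst of F
| MAdd of mpoly V & mpoly V
| MMul of mpoly V & mpoly V
| MOpp of mpoly V.

Fixpoint meval (V : Type) (e : V -> F) (f : mpoly V) : F :=
  match f with
  | MVar v => e v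
  | MCst c => c
  | MAdd f g => meval e f + meval e g
  | MMul f g => meval e f * meval e g
  | MOpp f => - meval e f
  end.

(* polynomials in the 3n homogeneous coordinates of ((P^2)^* )^n *)
Definition cpoly (n : nat) := mpoly ('I_n * 'I_3).
Definition ceval (n : nat) (x : 'I_n -> vec3) (f : cpoly n) : F :=
  meval (fun ij => x ij.1 ord0 ij.2) f.

(* multihomogeneous polynomials: their vanishing at a point of
   ((P^2)^* )^n is well defined *)
Definition multihom (n : nat) (f : cpoly n) : Prop :=
  exists d : 'I_n -> nat, forall (lam : 'I_n -> F) (x : 'I_n -> vec3),
    ceval (fun i => lam i *: x i) f = (\prod_(i < n) lam i ^+ d i) * ceval x f.

Definition zero_locus (n : nat) (S : cpoly n -> Prop) (x : 'I_n -> vec3) : Prop :=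
  forall f, S f -> ceval x f = 0.

Definition zariski_irreducible (n : nat) (R : ('I_n -> vec3) -> Prop) : Prop :=
  (exists x, R x) /\
  forall S1 S2 : cpoly n -> Prop,
    (forall f, S1 f -> multihom f) -> (forall f, S2 f -> multihom f) ->
    (forall x, R x -> zero_locus S1 x \/ zero_locus S2 x) ->
    (forall x, R x -> zero_locus S1 x) \/ (forall x, R x -> zero_locus S2 x).

End LineArr.

From HB Require Import structures.
From mathcomp Require Import all_boot all_order all_algebra.
From mathcomp Require Import ring.
From Stdlib Require Import Classical FunctionalExtensionality.
Import GRing.Theory.
Local Open Scope ring_scope.
Set Implicit Arguments. Unset Strict Implicit. Unset Printing Implicit Defensive.

(* Let x be the lines H_1, ..., H_{n-1} and h the line H_n.  For x realizing
   I', the incidences of I ask h to pass through the points H_a ∩ H_b that lie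
   on H_n, and generically nothing more.  As H_n contains at most two multiple
   points, the admissible h form a linear family phi(x, z), z in F^3, which is
   polynomial and multihomogeneous in x: every line (no such point), the pencil
   through one point P(x), or the single line P(x) Q(x).  So R(I) is, up to
   rescaling h, the image of an open subset of R(I') x F^3 under
   (x, z) |-> (x, phi(x, z)).  A cover of R(I) by two closed sets pulls back
   to polynomials in x and z; since polynomial functions of z form a domain,
   z can be eliminated, giving a cover of R(I').  Irreducibility of R(I')
   then pushes forward to R(I). *)

Section Vec3.
Variable F : fieldType.
Local Notation vec := 'rV[F]_3.
Implicit Types (u v w p q h : vec) (a : F).

(* Indices are read in [nat_scope], so that [coord3 u 1] reduces through [inordK]. *)
Definition coord3 u (k : nat) : F := u ord0 (inord k).
Arguments coord3 u k%_N.

Lemma coord3E u (j : 'I_3) : u ord0 j = coord3 u j.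
Proof. by rewrite /coord3 inord_val. Qed.

Lemma vec3P u v :
  coord3 u 0 = coord3 v 0 -> coord3 u 1 = coord3 v 1 -> coord3 u 2 = coord3 v 2 ->
  u = v.
Proof. by move=> e0 e1 e2; apply/rowP => -[[|[|[|k]]] hk]; rewrite !coord3E. Qed.

Lemma coord3Z a u k : coord3 (a *: u) k = a * coord3 u k.
Proof. by rewrite /coord3 mxE. Qed.
Lemma coord3D u v k : coord3 (u + v) k = coord3 u k + coord3 v k.
Proof. by rewrite /coord3 mxE. Qed.
Lemma coord3N u k : coord3 (- u) k = - coord3 u k.
Proof. by rewrite /coord3 mxE. Qed.
Lemma coord3_0 k : coord3 0 k = 0.
Proof. by rewrite /coord3 mxE. Qed.

Lemma det3E u v w : det3 u v w =
  coord3 u 0 * (coord3 v 1 * coord3 w 2 - coord3 v 2 * coord3 w 1)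
  - coord3 u 1 * (coord3 v 0 * coord3 w 2 - coord3 v 2 * coord3 w 0)
  + coord3 u 2 * (coord3 v 0 * coord3 w 1 - coord3 v 1 * coord3 w 0).
Proof.
rewrite /det3 (expand_det_row _ ord0) !big_ord_recr big_ord0 /= /cofactor.
rewrite !(expand_det_row _ ord0) !big_ord_recr big_ord0 /= /cofactor.
rewrite !det_mx11 !mxE /= !big_ord0 !coord3E /=.
repeat match goal with |- context[bump ?a ?b] =>
  let c := eval compute in (bump a b) in change (bump a b) with c end.
rewrite !expr0 !expr1; ring.
Qed.

Definition dot u v : F := \sum_(j < 3) u ord0 j * v ord0 j.

Lemma dotE u v :
  dot u v = coord3 u 0 * coord3 v 0 + coord3 u 1 * coord3 v 1 + coord3 u 2 * coord3 v 2.
Proof. by rewrite /dot !big_ord_recl big_ord0 addr0 !coord3E addrA. Qed.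

Lemma on_lineE h p : on_line h p = (dot h p == 0).
Proof. by []. Qed.

Definition cross u v : vec := \row_(k < 3)
  (if (k : nat) == 0%N then coord3 u 1 * coord3 v 2 - coord3 u 2 * coord3 v 1
   else if (k : nat) == 1%N then coord3 u 2 * coord3 v 0 - coord3 u 0 * coord3 v 2
   else coord3 u 0 * coord3 v 1 - coord3 u 1 * coord3 v 0).

Lemma coord3_cross0 u v : coord3 (cross u v) 0 = coord3 u 1 * coord3 v 2 - coord3 u 2 * coord3 v 1.
Proof. by rewrite {1}/coord3 mxE inordK. Qed.
Lemma coord3_cross1 u v : coord3 (cross u v) 1 = coord3 u 2 * coord3 v 0 - coord3 u 0 * coord3 v 2.
Proof. by rewrite {1}/coord3 mxE inordK. Qed.
Lemma coord3_cross2 u v : coord3 (cross u v) 2 = coord3 u 0 * coord3 v 1 - coord3 u 1 * coord3 v 0.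
Proof. by rewrite {1}/coord3 mxE inordK. Qed.

Ltac coord3_ring :=
  rewrite ?det3E ?dotE;
  rewrite ?(coord3_cross0, coord3_cross1, coord3_cross2, coord3Z, coord3D, coord3N, coord3_0);
  ring.
Ltac vec3_ring := first [apply: vec3P; coord3_ring | coord3_ring].

Lemma dot_cross u v w : dot w (cross u v) = det3 u v w.
Proof. vec3_ring. Qed.
Lemma det3_same13 u v : det3 u v u = 0. Proof. vec3_ring. Qed.
Lemma det3_same23 u v : det3 u v v = 0. Proof. vec3_ring. Qed.
Lemma det3_swap12 u v w : det3 v u w = - det3 u v w. Proof. vec3_ring. Qed.
Lemma det3_swap23 u v w : det3 u w v = - det3 u v w. Proof. vec3_ring. Qed.
Lemma det3_rot u v w : det3 v w u = det3 u v w. Proof. vec3_ring. Qed.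
Lemma det3Z a b c u v w : det3 (a *: u) (b *: v) (c *: w) = a * b * c * det3 u v w.
Proof. vec3_ring. Qed.
Lemma det3Zr a u v w : det3 u v (a *: w) = a * det3 u v w. Proof. vec3_ring. Qed.
Lemma crossZ a b u v : cross (a *: u) (b *: v) = (a * b) *: cross u v.
Proof. vec3_ring. Qed.
Lemma crossC u v : cross u v = - cross v u. Proof. vec3_ring. Qed.
Lemma cross_scaler a v : cross (a *: v) v = 0. Proof. vec3_ring. Qed.
Lemma cross0r u : cross u 0 = 0. Proof. vec3_ring. Qed.
Lemma cross_cross h p q : cross h (cross p q) = dot h q *: p - dot h p *: q.
Proof. vec3_ring. Qed.
Lemma dot_cross_l p q : dot (cross p q) p = 0. Proof. vec3_ring. Qed.
Lemma dot_cross_r p q : dot (cross p q) q = 0. Proof. vec3_ring. Qed.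
Lemma dotZl a u v : dot (a *: u) v = a * dot u v. Proof. vec3_ring. Qed.
Lemma dotZr a u v : dot u (a *: v) = a * dot u v. Proof. vec3_ring. Qed.
Lemma dotC u v : dot u v = dot v u. Proof. vec3_ring. Qed.
Lemma scale_det3 u v w p : det3 u v w *: p =
  dot u p *: cross v w + dot v p *: cross w u + dot w p *: cross u v.
Proof. vec3_ring. Qed.

Lemma det3_eq0_perm (u v w : vec) : det3 u v w = 0 ->
  [/\ det3 v u w = 0, det3 u w v = 0, det3 w v u = 0, det3 v w u = 0 & det3 w u v = 0].
Proof.
move=> d0; split.
- by rewrite det3_swap12 d0 oppr0.
- by rewrite det3_swap23 d0 oppr0.
- by rewrite det3_swap12 det3_rot d0 oppr0.
- by rewrite det3_rot d0.
- by rewrite det3_rot det3_rot d0.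
Qed.

Lemma det3_eq0_rot (u v w u' v' w' : vec) :
  (det3 u v w = 0 <-> det3 u' v' w' = 0) -> (det3 v w u = 0 <-> det3 v' w' u' = 0).
Proof. by rewrite (det3_rot u) (det3_rot u'). Qed.

Lemma dot_delta (k : 'I_3) w : dot (delta_mx 0 k) w = w ord0 k.
Proof.
rewrite /dot (bigD1 k) //= big1 => [|j /negbTE jk]; last by rewrite mxE jk andbF mul0r.
by rewrite mxE eqxx mul1r addr0.
Qed.

Lemma exists_dot_neq0 w : w != 0 -> exists e, dot e w != 0.
Proof. by case/rV0Pn => k wk; exists (delta_mx 0 k); rewrite dot_delta. Qed.

Lemma cross_eq0_proj u w : w != 0 -> cross u w = 0 -> proj_eq u w.
Proof.
move=> /exists_dot_neq0 [e ew] uw0; exists (dot e u / dot e w).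
have /eqP := cross_cross e u w; rewrite uw0 cross0r eq_sym subr_eq0 => /eqP euw.
by rewrite mulrC -scalerA -euw scalerA mulVf ?scale1r.
Qed.

Lemma proj_eq_cross u w : proj_eq u w -> cross u w = 0.
Proof. by case=> c ->; rewrite cross_scaler. Qed.

Lemma cross_neq0 u w : w != 0 -> ~ proj_eq u w -> cross u w != 0.
Proof. by move=> wn np; apply/eqP => /(cross_eq0_proj wn). Qed.

Lemma det3_eq0_of_dot u v w p :
  p != 0 -> dot u p = 0 -> dot v p = 0 -> dot w p = 0 -> det3 u v w = 0.
Proof.
move=> pn up vp wp; apply/eqP.
have : det3 u v w *: p == 0 by rewrite scale_det3 up vp wp !scale0r !addr0.
by rewrite scaler_eq0 (negbTE pn) orbF.
Qed.

Lemma det3_eq0_of_proj u v w p :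
  proj_eq (cross u v) p -> dot w p = 0 -> det3 u v w = 0.
Proof. by case=> k E wp; rewrite -dot_cross E dotZr wp mulr0. Qed.

Lemma line_through_cross p h :
  p != 0 -> dot h p = 0 -> exists z c, h = c *: cross p z.
Proof.
move=> /exists_dot_neq0 [e ep] hp; rewrite dotC in ep.
exists (cross e h), (- (dot p e)^-1).
rewrite cross_cross (dotC p h) hp scale0r sub0r scalerN scaleNr opprK.
by rewrite scalerA mulVf ?scale1r.
Qed.

End Vec3.

Section PolynomialFunctions.
Variables (F : fieldType) (V : Type).
Local Notation vec := 'rV[F]_3.

Lemma eq_meval (a b : V -> F) (e : mpoly F V) : a =1 b -> meval a e = meval b e.
Proof. by move=> ab; elim: e => /= [y|c|f IHf g IHg|f IHf g IHg|f IHf]; rewrite ?ab ?IHf ?IHg. Qed.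

Definition polyfun (g : (V -> F) -> F) := exists e : mpoly F V, forall a, meval a e = g a.
Definition polyfun3 (u : (V -> F) -> vec) := forall k : 'I_3, polyfun (fun a => u a ord0 k).

Lemma eq_polyfun g g' : polyfun g -> g =1 g' -> polyfun g'.
Proof. by move=> [e E] gg'; exists e => a; rewrite E gg'. Qed.
Lemma polyfun_cst c : polyfun (fun _ => c).
Proof. by exists (MCst V c). Qed.
Lemma polyfun_var y : polyfun (fun a => a y).
Proof. by exists (MVar F y). Qed.
Lemma polyfunD g1 g2 : polyfun g1 -> polyfun g2 -> polyfun (fun a => g1 a + g2 a).
Proof. by case=> e1 E1 [e2 E2]; exists (MAdd e1 e2) => a /=; rewrite E1 E2. Qed.
Lemma polyfunM g1 g2 : polyfun g1 -> polyfun g2 -> polyfun (fun a => g1 a * g2 a).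
Proof. by case=> e1 E1 [e2 E2]; exists (MMul e1 e2) => a /=; rewrite E1 E2. Qed.
Lemma polyfunN g : polyfun g -> polyfun (fun a => - g a).
Proof. by case=> e E; exists (MOpp e) => a /=; rewrite E. Qed.
Lemma polyfunB g1 g2 : polyfun g1 -> polyfun g2 -> polyfun (fun a => g1 a - g2 a).
Proof. by move=> h1 h2; apply: polyfunD => //; apply: polyfunN. Qed.

Lemma polyfun_prod (I : Type) (r : seq I) (P : pred I) (G : I -> (V -> F) -> F) :
  (forall i, polyfun (G i)) -> polyfun (fun a => \prod_(i <- r | P i) G i a).
Proof.
move=> PG; elim: r => [|y r IHr].
  by apply: eq_polyfun (polyfun_cst 1) _ => a; rewrite big_nil.
case Py: (P y).
  by apply: eq_polyfun (polyfunM (PG y) IHr) _ => a; rewrite big_cons Py.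
by apply: eq_polyfun IHr _ => a; rewrite big_cons Py.
Qed.

Lemma polyfun_meval W (e : mpoly F W) (s : W -> (V -> F) -> F) :
  (forall y, polyfun (s y)) -> polyfun (fun a => meval (fun y => s y a) e).
Proof.
move=> Ps; elim: e => /= [y|c|f IHf g IHg|f IHf g IHg|f IHf].
- exact: Ps.
- exact: polyfun_cst.
- exact: polyfunD.
- exact: polyfunM.
- exact: polyfunN.
Qed.

Lemma polyfun3_cst (c : vec) : polyfun3 (fun _ => c).
Proof. by move=> k; apply: polyfun_cst. Qed.

Lemma polyfun3_cross u w : polyfun3 u -> polyfun3 w -> polyfun3 (fun a => cross (u a) (w a)).
Proof.
move=> Pu Pw k; eapply eq_polyfun; last by move=> a; rewrite [RHS]mxE.
by case: (k == 0 :> nat); case: (k == 1 :> nat);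
  apply: polyfunB; apply: polyfunM; first [exact: Pu | exact: Pw].
Qed.

Lemma polyfun3Z (c : (V -> F) -> F) u :
  polyfun c -> polyfun3 u -> polyfun3 (fun a => c a *: u a).
Proof. by move=> Pc Pu k; apply: eq_polyfun (polyfunM Pc (Pu k)) _ => a; rewrite mxE. Qed.

Lemma polyfun_det3 u v w : polyfun3 u -> polyfun3 v -> polyfun3 w ->
  polyfun (fun a => det3 (u a) (v a) (w a)).
Proof.
move=> Pu Pv Pw; eapply eq_polyfun; last by move=> a; rewrite [RHS]det3E.
by repeat (apply: polyfunB || apply: polyfunD || apply: polyfunM
           || apply: Pu || apply: Pv || apply: Pw).
Qed.

End PolynomialFunctions.

Arguments polyfun_var {F V} y.
Arguments polyfun3_cst {F V} c.

Fixpoint restrict_line (F : fieldType) V (a d : V -> F) (e : mpoly F V) : {poly F} :=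
  match e with
  | MVar y => (a y)%:P + (d y)%:P * 'X
  | MCst c => c%:P
  | MAdd e1 e2 => restrict_line a d e1 + restrict_line a d e2
  | MMul e1 e2 => restrict_line a d e1 * restrict_line a d e2
  | MOpp e1 => - restrict_line a d e1
  end.

Lemma horner_restrict_line (F : fieldType) V (a d : V -> F) e t :
  (restrict_line a d e).[t] = meval (fun y => a y + t * d y) e.
Proof.
elim: e => /= [y|c|f IHf g IHg|f IHf g IHg|f IHf]; rewrite ?hornerE ?IHf ?IHg //.
by rewrite mulrC.
Qed.

(* The polynomial functions on an affine space over an algebraically closed
   (hence infinite) field form an integral domain: restrict both to the line
   through two points where they do not vanish. *)
Lemma polyfun_mul_neq0 (F : closedFieldType) V (g1 g2 : (V -> F) -> F) :
  polyfun g1 -> polyfun g2 -> (exists a, g1 a != 0) -> (exists b, g2 b != 0) ->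
  exists c, g1 c * g2 c != 0.
Proof.
case=> e1 E1 [e2 E2] [a g1a] [b g2b].
pose d y := b y - a y.
have at0 : (restrict_line a d e1).[0] = g1 a.
  by rewrite horner_restrict_line -E1; apply: eq_meval => y; rewrite mul0r addr0.
have at1 : (restrict_line a d e2).[1] = g2 b.
  by rewrite horner_restrict_line -E2; apply: eq_meval => y; rewrite mul1r addrC subrK.
have p1 : restrict_line a d e1 != 0 by apply: contraNneq g1a => p0; rewrite -at0 p0 horner0.
have p2 : restrict_line a d e2 != 0 by apply: contraNneq g2b => p0; rewrite -at1 p0 horner0.
have [t /rootPf] := closed_nonrootP _ (mulf_neq0 p1 p2); rewrite hornerM => /negbT pt.
by exists (fun y => a y + t * d y); rewrite -E1 -E2 -!horner_restrict_line.
Qed.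

Section Homogeneity.
Variables (F : fieldType) (n : nat).
Local Notation vec := 'rV[F]_3.
Implicit Types (lam : 'I_n -> F) (d : 'I_n -> nat).

Definition prod_pow lam d : F := \prod_(i < n) lam i ^+ d i.

Lemma prod_powD lam d1 d2 :
  prod_pow lam (fun i => d1 i + d2 i)%N = prod_pow lam d1 * prod_pow lam d2.
Proof. by rewrite /prod_pow -big_split; apply: eq_bigr => i _; rewrite exprD. Qed.
Lemma prod_pow0 lam : prod_pow lam (fun _ => 0%N) = 1.
Proof. by rewrite /prod_pow big1 // => i _; rewrite expr0. Qed.
Lemma prod_pow_delta lam j : prod_pow lam (fun i => nat_of_bool (i == j)) = lam j.
Proof.
rewrite /prod_pow (bigD1 j) //= eqxx expr1 big1 ?mulr1 // => i /negbTE ->.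
by rewrite expr0.
Qed.
Lemma prod_powX lam d c : prod_pow lam d ^+ c = prod_pow lam (fun i => d i * c)%N.
Proof. by rewrite /prod_pow -prodrXl; apply: eq_bigr => i _; rewrite exprM. Qed.

Definition homog (g : ('I_n -> vec) -> F) :=
  exists d, forall lam x, g (fun i => lam i *: x i) = prod_pow lam d * g x.
Definition homog3 (g : ('I_n -> vec) -> vec) :=
  exists d, forall lam x, g (fun i => lam i *: x i) = prod_pow lam d *: g x.

Lemma eq_homog g g' : homog g -> g =1 g' -> homog g'.
Proof. by case=> d Hg gg'; exists d => lam x; rewrite -!gg' Hg. Qed.
Lemma homog_cst c : homog (fun _ => c).
Proof. by exists (fun _ => 0%N) => lam x; rewrite prod_pow0 mul1r. Qed.
Lemma homogM g1 g2 : homog g1 -> homog g2 -> homog (fun x => g1 x * g2 x).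
Proof.
case=> d1 H1 [d2 H2]; exists (fun i => d1 i + d2 i)%N => lam x.
by rewrite H1 H2 prod_powD mulrACA.
Qed.

Lemma homog_prod (I : Type) (r : seq I) (P : pred I) (G : I -> ('I_n -> vec) -> F) :
  (forall i, homog (G i)) -> homog (fun x => \prod_(i <- r | P i) G i x).
Proof.
move=> HG; elim: r => [|y r IHr].
  by apply: eq_homog (homog_cst 1) _ => x; rewrite big_nil.
case Py: (P y).
  by apply: eq_homog (homogM (HG y) IHr) _ => x; rewrite big_cons Py.
by apply: eq_homog IHr _ => x; rewrite big_cons Py.
Qed.

Lemma homog3_var j : homog3 (fun x => x j).
Proof. by exists (fun i => nat_of_bool (i == j)) => lam x; rewrite prod_pow_delta. Qed.
Lemma homog3_cst (c : vec) : homog3 (fun _ => c).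
Proof. by exists (fun _ => 0%N) => lam x; rewrite prod_pow0 scale1r. Qed.
Lemma homog3_cross u w : homog3 u -> homog3 w -> homog3 (fun x => cross (u x) (w x)).
Proof.
case=> d1 H1 [d2 H2]; exists (fun i => d1 i + d2 i)%N => lam x.
by rewrite H1 H2 crossZ prod_powD.
Qed.
Lemma homog3Z c u : homog c -> homog3 u -> homog3 (fun x => c x *: u x).
Proof.
case=> d1 H1 [d2 H2]; exists (fun i => d1 i + d2 i)%N => lam x.
by rewrite H1 H2 scalerA prod_powD scalerA mulrAC.
Qed.
Lemma homog_entry u (k : 'I_3) : homog3 u -> homog (fun x => u x ord0 k).
Proof. by case=> d H; exists d => lam x; rewrite H mxE. Qed.
Lemma homog_det3 u v w : homog3 u -> homog3 v -> homog3 w ->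
  homog (fun x => det3 (u x) (v x) (w x)).
Proof.
case=> d1 H1 [d2 H2] [d3 H3]; exists (fun i => d1 i + d2 i + d3 i)%N => lam x.
by rewrite H1 H2 H3 det3Z !prod_powD.
Qed.

End Homogeneity.

Section Incidence.
Variables (F : fieldType) (n : nat).

Lemma mem_incidence (B : 'I_n -> 'rV[F]_3) i j k : i != j -> j != k -> i != k ->
  ([set i; j; k] \in incidence B) <-> det3 (B i) (B j) (B k) = 0.
Proof.
move=> ij jk ik; split; last first.
  move=> d0; rewrite inE; apply/existsP; exists i; apply/existsP; exists j.
  by apply/existsP; exists k; rewrite ij jk ik eqxx; apply/eqP.
rewrite inE => /existsP [i' /existsP [j' /existsP [k' /and5P [ij' jk' ik' /eqP E /eqP d0]]]].
have Hi : i' \in [set i; j; k] by rewrite E !inE eqxx.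
have Hj : j' \in [set i; j; k] by rewrite E !inE eqxx ?orbT.
have Hk : k' \in [set i; j; k] by rewrite E !inE eqxx ?orbT.
move: Hi Hj Hk d0 ij' jk' ik'; rewrite !inE -!orbA.
by case/or3P => /eqP -> /or3P [] /eqP -> /or3P [] /eqP -> d0; rewrite ?eqxx //;
  case: (det3_eq0_perm d0).
Qed.

Lemma not_zero_locus (S : cpoly F n -> Prop) x :
  ~ zero_locus S x -> exists t, S t /\ ceval x t != 0.
Proof.
move=> nS; apply: NNPP => nt; apply: nS => t St.
by apply/eqP/negPn/negP => tx; apply: nt; exists t.
Qed.

End Incidence.

Section Arrangement.
Variables (F : closedFieldType) (m : nat) (A : 'I_m.+1 -> 'rV[F]_3).
Hypothesis A_neq0 : forall i, A i != 0.
Hypothesis A_distinct : forall i j, i != j -> ~ proj_eq (A i) (A j).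
Local Notation vec := 'rV[F]_3.
Local Notation widen := (widen_ord (leqnSn m)).

Definition restrict (x : 'I_m.+1 -> vec) : 'I_m -> vec := fun i => x (widen i).
Definition extend (x : 'I_m -> vec) (h : vec) : 'I_m.+1 -> vec :=
  fun i => if unlift ord_max i is Some j then x j else h.

Local Notation A' := (restrict A).
Local Notation R := (realization (F:=F) (incidence A)).
Local Notation R' := (realization (F:=F) (incidence A')).

Lemma widen_lift i : widen i = lift ord_max i.
Proof. by apply/val_inj; rewrite /= /bump leqNgt ltn_ord. Qed.

Lemma widen_or_max (i : 'I_m.+1) : (exists j, i = widen j) \/ i = ord_max.
Proof.
case: (unliftP ord_max i) => [j ->|->]; last by right.
by left; exists j; rewrite widen_lift.
Qed.

Lemma widen_eq i j : (widen i == widen j) = (i == j).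
Proof. by rewrite -val_eqE. Qed.
Lemma widen_neq_max j : widen j != ord_max.
Proof. by rewrite -val_eqE /= neq_ltn ltn_ord. Qed.
Lemma max_neq_widen j : ord_max != widen j.
Proof. by rewrite eq_sym widen_neq_max. Qed.

Lemma extend_widen x h j : extend x h (widen j) = x j.
Proof. by rewrite /extend widen_lift liftK. Qed.
Lemma extend_max x h : extend x h ord_max = h.
Proof. by rewrite /extend unlift_none. Qed.

Lemma realization_A : R A.
Proof. by split=> // i j k ij jk ik; apply: mem_incidence. Qed.

Lemma realization_restrict x : R x -> R' (restrict x).
Proof.
case=> x_neq0 x_dist x_inc; split=> [i|i j ij|i j k ij jk ik]; first exact: x_neq0.
  by apply: x_dist; rewrite widen_eq.
apply: iff_trans (mem_incidence _ ij jk ik) _.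
rewrite -widen_eq in ij; rewrite -widen_eq in jk; rewrite -widen_eq in ik.
exact: iff_trans (iff_sym (mem_incidence A ij jk ik)) (x_inc _ _ _ ij jk ik).
Qed.

Lemma realization_det3 x a b c : R' x -> a != b ->
  det3 (A' a) (A' b) (A' c) = 0 <-> det3 (x a) (x b) (x c) = 0.
Proof.
case=> _ _ x_inc ab.
have [->|ca] := eqVneq c a; first by rewrite !det3_same13.
have [->|cb] := eqVneq c b; first by rewrite !det3_same23.
rewrite eq_sym in cb; rewrite eq_sym in ca.
exact: iff_trans (iff_sym (mem_incidence _ ab cb ca)) (x_inc _ _ _ ab cb ca).
Qed.

Lemma realization_extend x h : R' x -> h != 0 -> (forall i, cross h (x i) != 0) ->
  (forall i j, i != j ->
     det3 (A' i) (A' j) (A ord_max) = 0 <-> det3 (x i) (x j) h = 0) ->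
  R (extend x h).
Proof.
move=> xR h_neq0 hx hA; case: (xR) => x_neq0 x_dist _; split.
- by move=> i; case: (widen_or_max i) => [[j ->]|->]; rewrite ?extend_widen ?extend_max.
- move=> i j; case: (widen_or_max i) => [[i' ->]|->]; case: (widen_or_max j) => [[j' ->]|->];
    rewrite ?extend_widen ?extend_max ?widen_eq ?eqxx //.
  + exact: x_dist.
  + by move=> _ /proj_eq_cross hx0; move: (hx i'); rewrite crossC hx0 oppr0 eqxx.
  + by move=> _ /proj_eq_cross hx0; move: (hx j'); rewrite hx0 eqxx.
- move=> i j k ij jk ik; apply: iff_trans (mem_incidence _ ij jk ik) _.
  case: (widen_or_max i) ij ik => [[i' ->]|->]; case: (widen_or_max j) jk => [[j' ->]|->];
    case: (widen_or_max k) => [[k' ->]|->];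
    rewrite ?extend_widen ?extend_max ?widen_eq ?widen_neq_max ?max_neq_widen ?eqxx //.
  + by move=> jk ij ik; apply: realization_det3.
  + by move=> _ ij _; apply: hA.
  + by move=> _ _ ik; apply: det3_eq0_rot; apply: hA; rewrite eq_sym.
  + by move=> jk _ _; do 2 apply: det3_eq0_rot; apply: hA.
Qed.

Lemma realization_det3_max x a b : R x -> a != b ->
  det3 (A' a) (A' b) (A ord_max) = 0 <-> det3 (x (widen a)) (x (widen b)) (x ord_max) = 0.
Proof.
case=> _ _ x_inc; rewrite -widen_eq => ab.
have [bM aM] := (widen_neq_max b, widen_neq_max a).
exact: iff_trans (iff_sym (mem_incidence A ab bM aM)) (x_inc _ _ _ ab bM aM).
Qed.

Lemma ceval_extend_eq0 f x c h : multihom f -> x ord_max = c *: h ->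
  ceval (extend (restrict x) h) f = 0 -> ceval x f = 0.
Proof.
case=> d Hd xh f0.
pose lam (i : 'I_m.+1) := if i == ord_max then c else 1.
have -> : ceval x f = ceval (fun i => lam i *: extend (restrict x) h i) f.
  apply: eq_meval => -[i j] /=; rewrite /lam.
  case: (widen_or_max i) => [[i' ->]|->]; last by rewrite eqxx extend_max xh.
  by rewrite (negbTE (widen_neq_max i')) scale1r extend_widen.
by rewrite Hd f0 mulr0.
Qed.

Definition generic_pair (p : 'I_m * 'I_m) : bool :=
  (p.1 != p.2) && (det3 (A' p.1) (A' p.2) (A ord_max) != 0).

(* The conditions [h != 0] and [cross h (x i) != 0] become polynomial once a
   nonzero entry [k0], [kk i] of each vector is chosen. *)
Definition genericity (x : 'I_m -> vec) (h : vec) (k0 : 'I_3) (kk : 'I_m -> 'I_3) : F :=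
  (\prod_(p | generic_pair p) det3 (x p.1) (x p.2) h) * h ord0 k0 *
  \prod_i cross h (x i) ord0 (kk i).

Lemma genericity_neq0 x h k0 kk : genericity x h k0 kk != 0 ->
  [/\ h != 0, forall i, cross h (x i) != 0 &
      forall i j, generic_pair (i, j) -> det3 (x i) (x j) h != 0].
Proof.
rewrite /genericity !mulf_eq0 !negb_or => /andP [/andP [/prodf_neq0 hA hk0] /prodf_neq0 hkk].
split=> [|i|i j /(hA (i, j)) //].
  by apply: contraNneq hk0 => ->; rewrite mxE.
by apply: contraNneq (hkk i isT) => ->; rewrite mxE.
Qed.

Lemma realization_genericity x c h : R x -> x ord_max = c *: h ->
  exists k0 kk, genericity (restrict x) h k0 kk != 0.
Proof.
move=> xR xh; case: (xR) => x_neq0 x_dist _.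
have h_neq0 : h != 0 by apply: contraNneq (x_neq0 ord_max) => h0; rewrite xh h0 scaler0.
have /rV0Pn [k0 hk0] := h_neq0.
have hx i : cross h (x (widen i)) != 0.
  apply/negP => /eqP /(cross_eq0_proj (x_neq0 _)) [k hk].
  apply: (x_dist ord_max (widen i) (max_neq_widen i)).
  by exists (c * k); rewrite xh hk scalerA.
have /fin_all_exists [kk hkk] : forall i, exists k, cross h (x (widen i)) ord0 k != 0.
  by move=> i; apply/rV0Pn.
exists k0, kk; rewrite /genericity !mulf_neq0 //; last by apply/prodf_neq0 => i _; apply: hkk.
apply/prodf_neq0 => -[i j] /andP /= [ij]; apply: contra => /eqP hx0.
by apply/eqP/(realization_det3_max xR ij); rewrite xh det3Zr hx0 mulr0.
Qed.

(* [phi] is polynomial: it maps polynomial families of arguments to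
   polynomial families. *)
Definition param_polyfun (phi : ('I_m -> vec) -> vec -> vec) :=
  forall V (X : (V -> F) -> 'I_m -> vec) (Z : (V -> F) -> vec),
    (forall i, polyfun3 (fun a => X a i)) -> polyfun3 Z ->
    polyfun3 (fun a => phi (X a) (Z a)).
Definition param_homog (phi : ('I_m -> vec) -> vec -> vec) :=
  forall z, homog3 (fun x => phi x z).
Definition param_vanish (phi : ('I_m -> vec) -> vec -> vec) :=
  forall x, R' x -> forall i j z, i != j ->
    det3 (A' i) (A' j) (A ord_max) = 0 -> det3 (x i) (x j) (phi x z) = 0.
Definition param_onto (phi : ('I_m -> vec) -> vec -> vec) :=
  forall x, R x -> exists z c, x ord_max = c *: phi (restrict x) z.

(* [phi x z], for a parameter [z] in F^3, describes the lines [H_n] that are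
   compatible with the incidences [I] when the other lines are [x]. *)
Definition parametrization (phi : ('I_m -> vec) -> vec -> vec) :=
  [/\ param_polyfun phi, param_homog phi, param_vanish phi & param_onto phi].

Section Pullback.
Variable phi : ('I_m -> vec) -> vec -> vec.
Hypotheses (phi_polyfun : param_polyfun phi) (phi_homog : param_homog phi).
Hypotheses (phi_vanish : param_vanish phi) (phi_onto : param_onto phi).

(* The genericity factor kills the points [x] where [extend x (phi x z)] may
   fail to realize [I]. *)
Definition pullback (f : cpoly F m.+1) z k0 kk (x : 'I_m -> vec) : F :=
  ceval (extend x (phi x z)) f * genericity x (phi x z) k0 kk.

Lemma pullback_polyfun f k0 kk V (X : (V -> F) -> 'I_m -> vec) (Z : (V -> F) -> vec) :
  (forall i, polyfun3 (fun a => X a i)) -> polyfun3 Z ->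
  polyfun (fun a => pullback f (Z a) k0 kk (X a)).
Proof.
move=> PX PZ; have Pphi := phi_polyfun PX PZ.
apply: polyfunM.
  apply: (@polyfun_meval _ _ _ f (fun ij a => extend (X a) (phi (X a) (Z a)) ij.1 ord0 ij.2)).
  move=> -[i j] /=; rewrite /extend.
  by case: (unlift ord_max i) => [i'|]; [exact: PX | exact: Pphi].
apply: polyfunM; first apply: polyfunM.
- by apply: polyfun_prod => p; apply: polyfun_det3.
- exact: Pphi.
- by apply: polyfun_prod => i; apply: polyfun3_cross.
Qed.

Lemma pullback_homog f z k0 kk : multihom f -> homog (pullback f z k0 kk).
Proof.
move=> [d Hd]; apply: homogM.
  have [dz Hz] := phi_homog z.
  exists (fun i => d (widen i) + dz i * d ord_max)%N => lam x; rewrite Hz.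
  pose lam' i := if unlift ord_max i is Some j then lam j else prod_pow lam dz.
  have -> : ceval (extend (fun i => lam i *: x i) (prod_pow lam dz *: phi x z)) f =
            ceval (fun i => lam' i *: extend x (phi x z) i) f.
    by apply: eq_meval => -[i j] /=; rewrite /extend /lam'; case: (unlift ord_max i).
  rewrite Hd; congr (_ * _).
  rewrite /prod_pow big_ord_recr /= /lam' unlift_none -/(prod_pow lam dz) prod_powX.
  rewrite /prod_pow -big_split /=; apply: eq_bigr => i _.
  by rewrite exprD widen_lift liftK.
rewrite /genericity; apply: homogM; first apply: homogM.
- apply: homog_prod => p.
  by apply: homog_det3; [exact: homog3_var | exact: homog3_var | exact: phi_homog].
- exact: homog_entry.
- apply: homog_prod => i; apply: homog_entry.
  by apply: homog3_cross; [exact: phi_homog | exact: homog3_var].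
Qed.

Lemma pullback_cpoly f z k0 kk :
  exists t : cpoly F m, forall x, ceval x t = pullback f z k0 kk x.
Proof.
have [|e He] := @pullback_polyfun f k0 kk _ (fun a i => \row_j a (i, j)) (fun _ => z) _
  (polyfun3_cst z).
  by move=> i k; apply: eq_polyfun (polyfun_var (i, k)) _ => a; rewrite mxE.
exists e => x; rewrite /ceval He; congr pullback.
by apply: functional_extensionality => i; apply/rowP => j; rewrite mxE.
Qed.

Lemma pullback_polyfun_param f k0 kk x :
  polyfun (fun a : 'I_3 -> F => pullback f (\row_j a j) k0 kk x).
Proof.
apply: (@pullback_polyfun f k0 kk _ (fun _ => x)) => [i|k]; first exact: polyfun3_cst.
by apply: eq_polyfun (polyfun_var k) _ => a; rewrite mxE.
Qed.

Lemma realization_extend_param x z k0 kk :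
  R' x -> genericity x (phi x z) k0 kk != 0 -> R (extend x (phi x z)).
Proof.
move=> xR /genericity_neq0 [h_neq0 hx hA]; apply: realization_extend => // i j ij.
split=> [dA|dx]; first exact: phi_vanish.
apply/eqP/negPn/negP => dA; move: (hA i j).
by rewrite /generic_pair /= ij dA dx eqxx => /(_ isT).
Qed.

Definition lift_family (S : cpoly F m.+1 -> Prop) (t : cpoly F m) :=
  exists f z k0 kk, S f /\ forall x, ceval x t = pullback f z k0 kk x.

Lemma lift_family_multihom S :
  (forall f, S f -> multihom f) -> forall t, lift_family S t -> multihom t.
Proof.
move=> hS t [f [z [k0 [kk [Sf Et]]]]].
have [d Hd] := pullback_homog z k0 kk (hS f Sf).
by exists d => lam x; rewrite !Et; exact: Hd.
Qed.

Lemma zero_locus_lift_family S : (forall f, S f -> multihom f) ->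
  (forall x, R' x -> zero_locus (lift_family S) x) -> forall x, R x -> zero_locus S x.
Proof.
move=> hS HT x xR f Sf.
have [z [c xh]] := phi_onto xR.
have [k0 [kk gen]] := realization_genericity xR xh.
have [t Et] := pullback_cpoly f z k0 kk.
have t0 : ceval (restrict x) t = 0.
  by apply: HT (realization_restrict xR) _ _; exists f, z, k0, kk.
apply: ceval_extend_eq0 (hS f Sf) xh _.
by move: t0; rewrite Et /pullback => /eqP; rewrite mulf_eq0 (negbTE gen) orbF => /eqP.
Qed.

(* Where the pullbacks of both families fail to vanish, they do so for a
   common value of the parameter, since polynomial functions form a domain. *)
Lemma lift_family_cover S1 S2 : (forall x, R x -> zero_locus S1 x \/ zero_locus S2 x) ->
  forall x, R' x -> zero_locus (lift_family S1) x \/ zero_locus (lift_family S2) x.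
Proof.
move=> cover x xR; apply: NNPP => /not_or_and [/not_zero_locus [t1 [T1 t1x]]].
move=> /not_zero_locus [t2 [T2 t2x]].
case: T1 t1x => f1 [z1 [k1 [kk1 [S1f1 ->]]]] f1x.
case: T2 t2x => f2 [z2 [k2 [kk2 [S2f2 ->]]]] f2x.
have row_eta (z : vec) : \row_j z ord0 j = z by apply/rowP => j; rewrite mxE.
have w1 : exists a, pullback f1 (\row_j a j) k1 kk1 x != 0.
  by exists (z1 ord0); rewrite row_eta.
have w2 : exists a, pullback f2 (\row_j a j) k2 kk2 x != 0.
  by exists (z2 ord0); rewrite row_eta.
have [a] := polyfun_mul_neq0 (pullback_polyfun_param f1 k1 kk1 x)
  (pullback_polyfun_param f2 k2 kk2 x) w1 w2.
have neq0_mul (p q : F) : p * q != 0 -> p != 0 /\ q != 0.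
  by rewrite mulf_eq0 negb_or => /andP.
rewrite /pullback => /neq0_mul [/neq0_mul [f1a g1] /neq0_mul [f2a _]].
case: (cover _ (realization_extend_param xR g1)) => [/(_ f1 S1f1)|/(_ f2 S2f2)] /eqP.
  by rewrite (negbTE f1a).
by rewrite (negbTE f2a).
Qed.

Lemma irreducible_of_parametrization :
  zariski_irreducible R' -> zariski_irreducible R.
Proof.
case=> _ irr'; split; first by exists A; exact: realization_A.
move=> S1 S2 hS1 hS2 cover.
have [T1|T2] := irr' _ _ (lift_family_multihom hS1) (lift_family_multihom hS2)
  (lift_family_cover cover).
- by left; apply: zero_locus_lift_family.
- by right; apply: zero_locus_lift_family.
Qed.

End Pullback.

Lemma realization_cross_neq0 x a b : R' x -> a != b -> cross (x a) (x b) != 0.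
Proof. by case=> x_neq0 x_dist _ ab; apply: cross_neq0; [apply: x_neq0 | apply: x_dist]. Qed.

Lemma parametrization_free :
  (forall i j, i != j -> det3 (A' i) (A' j) (A ord_max) != 0) ->
  parametrization (fun _ z => z).
Proof.
move=> hA; split.
- by move=> V X Z _.
- by move=> z; apply: homog3_cst.
- by move=> x _ i j z ij /eqP; rewrite (negbTE (hA i j ij)).
- by move=> x _; exists (x ord_max), 1; rewrite scale1r.
Qed.

Lemma parametrization_pencil a b :
  a != b -> det3 (A' a) (A' b) (A ord_max) = 0 ->
  (forall i j, i != j -> det3 (A' i) (A' j) (A ord_max) = 0 ->
     det3 (A' a) (A' b) (A' i) = 0 /\ det3 (A' a) (A' b) (A' j) = 0) ->
  parametrization (fun x z => cross (cross (x a) (x b)) z).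
Proof.
move=> ab hab hpencil; split.
- by move=> V X Z PX PZ; apply: polyfun3_cross => //; apply: polyfun3_cross.
- by move=> z; apply: homog3_cross; [apply: homog3_cross; apply: homog3_var | apply: homog3_cst].
- move=> x xR i j z ij hij; have [hi hj] := hpencil i j ij hij.
  apply: (det3_eq0_of_dot (realization_cross_neq0 xR ab)); rewrite ?dot_cross_l // dot_cross.
    exact/(realization_det3 _ xR ab).
  exact/(realization_det3 _ xR ab).
- move=> x xR; apply: line_through_cross.
    exact: realization_cross_neq0 (realization_restrict xR) ab.
  by rewrite dot_cross; apply/(realization_det3_max xR ab).
Qed.

Hypothesis Hn_two_mult : at_most_two_mult_on A (A ord_max).

Lemma mult_point_cross i j : i != j -> det3 (A' i) (A' j) (A ord_max) = 0 ->
  is_mult_point A (cross (A' i) (A' j)) /\ on_line (A ord_max) (cross (A' i) (A' j)).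
Proof.
move=> ij hij; rewrite on_lineE dot_cross hij eqxx; split=> //; split.
  by apply: cross_neq0; [apply: A_neq0 | apply: A_distinct; rewrite widen_eq].
exists (widen i), (widen j), ord_max; rewrite widen_eq !widen_neq_max.
by split=> //; rewrite !on_lineE !dot_cross det3_same13 det3_same23 hij eqxx.
Qed.

Lemma mult_points_on_Hn a b c d i j : a != b -> c != d -> i != j ->
  det3 (A' a) (A' b) (A ord_max) = 0 -> det3 (A' c) (A' d) (A ord_max) = 0 ->
  det3 (A' i) (A' j) (A ord_max) = 0 ->
  ~ (det3 (A' a) (A' b) (A' c) = 0 /\ det3 (A' a) (A' b) (A' d) = 0) ->
  (det3 (A' a) (A' b) (A' i) = 0 /\ det3 (A' a) (A' b) (A' j) = 0) \/
  (det3 (A' c) (A' d) (A' i) = 0 /\ det3 (A' c) (A' d) (A' j) = 0).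
Proof.
move=> ab cd ij hab hcd hij hcd_ab; apply: NNPP => /not_or_and [hij_ab hij_cd].
apply: Hn_two_mult.
exists (cross (A' a) (A' b)), (cross (A' c) (A' d)), (cross (A' i) (A' j)).
split; try exact: mult_point_cross.
split=> hproj.
- by apply: hcd_ab; split; apply: (det3_eq0_of_proj hproj);
    rewrite dot_cross ?det3_same13 ?det3_same23.
- by apply: hij_cd; split; apply: (det3_eq0_of_proj hproj);
    rewrite dot_cross ?det3_same13 ?det3_same23.
- by apply: hij_ab; split; apply: (det3_eq0_of_proj hproj);
    rewrite dot_cross ?det3_same13 ?det3_same23.
Qed.

(* With two multiple points [H_a ∩ H_b] and [H_c ∩ H_d] on [H_n], the line
   [H_n] is determined; the parameter only rescales it. *)
Lemma parametrization_two_points a b c d : a != b -> c != d ->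
  det3 (A' a) (A' b) (A ord_max) = 0 -> det3 (A' c) (A' d) (A ord_max) = 0 ->
  ~ (det3 (A' a) (A' b) (A' c) = 0 /\ det3 (A' a) (A' b) (A' d) = 0) ->
  parametrization (fun x z => z ord0 ord0 *: cross (cross (x a) (x b)) (cross (x c) (x d))).
Proof.
move=> ab cd hab hcd hcd_ab; split.
- move=> V X Z PX PZ; apply: polyfun3Z; first exact: PZ.
  by apply: polyfun3_cross; apply: polyfun3_cross.
- move=> z; apply: homog3Z; first exact: homog_cst.
  by apply: homog3_cross; apply: homog3_cross; apply: homog3_var.
- move=> x xR i j z ij hij.
  case: (mult_points_on_Hn ab cd ij hab hcd hij hcd_ab) => -[hi hj].
  + apply: (det3_eq0_of_dot (realization_cross_neq0 xR ab));
      rewrite ?dotZl ?dot_cross_l ?mulr0 // dot_cross.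
      exact/(realization_det3 _ xR ab).
    exact/(realization_det3 _ xR ab).
  + apply: (det3_eq0_of_dot (realization_cross_neq0 xR cd));
      rewrite ?dotZl ?dot_cross_r ?mulr0 // dot_cross.
      exact/(realization_det3 _ xR cd).
    exact/(realization_det3 _ xR cd).
- move=> x xR; have x'R := realization_restrict xR.
  set p := cross (restrict x a) (restrict x b); set q := cross (restrict x c) (restrict x d).
  have hp : dot (x ord_max) p = 0 by rewrite dot_cross; apply/(realization_det3_max xR ab).
  have hq : dot (x ord_max) q = 0 by rewrite dot_cross; apply/(realization_det3_max xR cd).
  have pq : cross p q != 0.
    apply/negP => /eqP /(cross_eq0_proj (realization_cross_neq0 x'R cd)) hproj.
    apply: hcd_ab; split; apply/(realization_det3 _ x'R ab); apply: (det3_eq0_of_proj hproj);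
      by rewrite dot_cross ?det3_same13 ?det3_same23.
  have /(cross_eq0_proj pq) [k xk] : cross (x ord_max) (cross p q) = 0.
    by rewrite cross_cross hq hp !scale0r subr0.
  by exists (delta_mx 0 ord0), k; rewrite mxE !eqxx scale1r.
Qed.

Lemma exists_parametrization : exists phi, parametrization phi.
Proof.
have [[a [b [ab hab]]]|] :=
  classic (exists a b, a != b /\ det3 (A' a) (A' b) (A ord_max) = 0); last first.
  move=> hfree; exists (fun _ z => z); apply: parametrization_free => i j ij.
  by apply/eqP => hij; apply: hfree; exists i, j.
have [hpencil|] := classic (forall i j, i != j -> det3 (A' i) (A' j) (A ord_max) = 0 ->
  det3 (A' a) (A' b) (A' i) = 0 /\ det3 (A' a) (A' b) (A' j) = 0).
  by eexists; exact: parametrization_pencil ab hab hpencil.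
move=> hnot_pencil.
have [c [d [cd [hcd hcd_ab]]]] : exists c d, c != d /\ det3 (A' c) (A' d) (A ord_max) = 0 /\
    ~ (det3 (A' a) (A' b) (A' c) = 0 /\ det3 (A' a) (A' b) (A' d) = 0).
  apply: NNPP => hnone; apply: hnot_pencil => i j ij hij.
  by apply: NNPP => hn; apply: hnone; exists i, j.
by eexists; exact: parametrization_two_points ab cd hab hcd hcd_ab.
Qed.

End Arrangement.

Theorem lemma1 (F : closedFieldType) (charF0 : [pchar F] =i pred0)
  (m : nat) (A : 'I_m.+1 -> 'rV[F]_3)
  (hA0 : forall i, A i != 0)
  (hAdist : forall i j, i != j -> ~ proj_eq (A i) (A j))
  (hmult : at_most_two_mult_on A (A ord_max)) :
  let A' : 'I_m -> 'rV[F]_3 := fun i => A (widen_ord (leqnSn m) i) in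
  zariski_irreducible (F:=F) (realization (F:=F) (incidence A')) ->
  zariski_irreducible (F:=F) (realization (F:=F) (incidence A)).
Proof.
move=> A'; have [phi [phi_polyfun phi_homog phi_vanish phi_onto]] :=
  exists_parametrization hA0 hAdist hmult.
exact: irreducible_of_parametrization phi_polyfun phi_homog phi_vanish phi_onto.
Qed.
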